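(* Let $H=(T_1,\dots,T_n,p_1,\dots,p_n)$ be a strategic game. For every ordinal $\alpha$, property $\mathbf C(\alpha)$ implies property $\mathbf D(\alpha)$.
   Context: A restriction of $H$ is $G=(S_1,\dots,S_n)$ with $S_i\subseteq T_i$ (possibly empty), ordered componentwise. For $s_i,s_i'\in T_i$, $s_i'\succ_G s_i$ means $p_i(s_i',s_{-i})>p_i(s_i,s_{-i})$ for all $s_{-i}\in\prod_{j\ne i}S_j$ (vacuous if this product is empty). $LS(G):=(S_1',\dots,S_n')$ with $S_i':=\{s_i\in T_i\mid\neg\exists s_i'\in S_i:\ s_i'\succ_G s_i\}$, and $\overline{LS}(G):=LS(G)\cap G$. Iterations: $T^0:=H$, $T^{\alpha+1}:=T(T^\alpha)$, $T^\beta:=\bigcap_{\alpha<\beta}T^\alpha$ for limit $\beta$. $R$ is a relaxation of $T$ if for all ordinals $\alpha$: (1) $T(R^\alpha)\subseteq R(R^\alpha)$; (2) if $T(R^\alpha)\subseteq R^\alpha$ then $R(R^\alpha)\subseteq R^\alpha$; (3) if $R(R^\alpha)=R^\alpha$ then $T(R^\alpha)=R^\alpha$. Property $\mathbf C(\alpha)$: for every relaxation $R$ of $\overline{LS}$, every $i$ and every $s_i\in T_i$: if some $s_i'\in T_i$ has $s_i'\succ_{R^\alpha}s_i$, then there is $s_i^*\in T_i$ with $s_i^*\succ_{R^\alpha}s_i$ and no $s_i'\in T_i$ with $s_i'\succ_{R^\alpha}s_i^*$. Property $\mathbf D(\alpha)$: for every relaxation $R$ of $\overline{LS}$, writing $R^\alpha=(S_1,\dots,S_n)$,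 every $i$ and every $s_i\in T_i$: if some $s_i'\in T_i$ has $s_i'\succ_{R^\alpha}s_i$, then some $s_i^*\in S_i$ has $s_i^*\succ_{R^\alpha}s_i$. *)

From mathcomp Require Import ssreflect ssrfun ssrbool eqtype ssrnat fintype.
From Stdlib Require Import Reals.




(* ---------- "ordinals": elements of well-ordered types ---------- *)
Record wellorder := WellOrder {
  wo_car :> Type;
  wo_lt : wo_car -> wo_car -> Prop;
  wo_irrefl : forall a, ~ wo_lt a a;
  wo_trans : forall a b c, wo_lt a b -> wo_lt b c -> wo_lt a c;
  wo_total : forall a b, wo_lt a b \/ a = b \/ wo_lt b a;
  wo_wf : well_founded wo_lt
}.

Arguments wo_lt {w}.

Section Game.
Variable n : nat.
Variable T : 'I_n -> Type.
Variable p : forall i : 'I_n, (forall j, T j) -> R.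

Definition restriction := forall i : 'I_n, T i -> Prop.

Definition full_game : restriction := fun _ _ => True.

Definition rsub (G G' : restriction) : Prop := forall i x, G i x -> G' i x.
Definition rcap (G G' : restriction) : restriction := fun i x => G i x /\ G' i x.

Definition join (i : 'I_n) (x : T i) (s : forall j, j <> i -> T j) (j : 'I_n) : T j :=
  match @eqP _ i j with
  | ReflectT e => eq_rect i T x j e
  | ReflectF ne => s j (fun e => ne (esym e))
  end.

Definition sdom (G : restriction) (i : 'I_n) (s' s : T i) : Prop :=
  forall smi : forall j, j <> i -> T j,
    (forall j (h : j <> i), G j (smi j h)) ->
    (p i (join i s smi) < p i (join i s' smi))%R.

Definition LS (G : restriction) : restriction :=
  fun i x => ~ exists s', G i s' /\ sdom G i s' x.

Definition LSbar (G : restriction) : restriction := rcap (LS G) G.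

Definition operator := restriction -> restriction.

(* F is the transfinite iteration of R along the well-order W:
   F 0 = H, F (a+1) = R (F a), F b = intersection of F a (a<b) for limit b *)
Definition is_iteration (W : wellorder) (Op : operator) (F : W -> restriction) : Prop :=
  forall a : W,
    ((forall b, ~ wo_lt b a) -> F a = full_game) /\
    (forall b, wo_lt b a -> (forall c, ~ (wo_lt b c /\ wo_lt c a)) ->
        F a = Op (F b)) /\
    ((exists b, wo_lt b a) ->
     (forall b, wo_lt b a -> exists c, wo_lt b c /\ wo_lt c a) ->
        F a = (fun i x => forall b, wo_lt b a -> F b i x)).

Definition relaxation (Op Tp : operator) : Prop :=
  forall (W : wellorder) (F : W -> restriction), is_iteration W Op F ->
  forall a : W,
    rsub (Tp (F a)) (Op (F a)) /\
    (rsub (Tp (F a)) (F a) -> rsub (Op (F a)) (F a)) /\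
    (Op (F a) = F a -> Tp (F a) = F a).

Definition prop_C (W : wellorder) (alpha : W) : Prop :=
  forall Op : operator, relaxation Op LSbar ->
  forall F, is_iteration W Op F ->
  forall (i : 'I_n) (s : T i),
    (exists s', sdom (F alpha) i s' s) ->
    exists sst, sdom (F alpha) i sst s /\ ~ exists s', sdom (F alpha) i s' sst.

Definition prop_D (W : wellorder) (alpha : W) : Prop :=
  forall Op : operator, relaxation Op LSbar ->
  forall F, is_iteration W Op F ->
  forall (i : 'I_n) (s : T i),
    (exists s', sdom (F alpha) i s' s) ->
    exists sst, F alpha i sst /\ sdom (F alpha) i sst s.

End Game.

(* A strategy that is undominated at stage alpha is undominated at every earlier
   stage, since the stages decrease and dominance only gets easier on smaller
   restrictions.  Hence it is never removed by LSbar and, by condition (1) of a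
   relaxation, never removed by R either: it lies in R^alpha.  The maximal
   dominator provided by C(alpha) is therefore a dominator inside S_i. *)
From mathcomp Require Import ssreflect ssrfun ssrbool eqtype ssrnat fintype.
From Stdlib Require Import Reals Classical.

Lemma wo_zero_succ_or_limit {W : wellorder} (a : W) :
  (forall b, ~ wo_lt b a) \/
  (exists2 b, wo_lt b a & forall c, ~ (wo_lt b c /\ wo_lt c a)) \/
  ((exists b, wo_lt b a) /\ forall b, wo_lt b a -> exists c, wo_lt b c /\ wo_lt c a).
Proof.
have [[b ltba]|no_pred] := classic (exists b, wo_lt b a); last first.
  by left=> b ltba; apply: no_pred; exists b.
have [[b' ltb'a b'_last]|no_last] :=
  classic (exists2 b, wo_lt b a & forall c, ~ (wo_lt b c /\ wo_lt c a)).
  by right; left; exists b'.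
right; right; split; first by exists b.
move=> c ltca; apply: NNPP => no_between; apply: no_last.
by exists c => // d ltcd; apply: no_between; exists d.
Qed.

Section Iterates.
Variables (n : nat) (T : 'I_n -> Type) (p : forall i : 'I_n, (forall j, T j) -> R).

Lemma sdom_antimono (G G' : restriction n T) i s' s :
  rsub n T G G' -> sdom n T p G' i s' s -> sdom n T p G i s' s.
Proof. by move=> subGG' dom smi smiG; apply: dom => j h; apply: subGG'. Qed.

Lemma LSbar_sub (G : restriction n T) : rsub n T (LSbar n T p G) G.
Proof. by move=> i x []. Qed.

Variables (W : wellorder) (Op : operator n T) (F : W -> restriction n T).
Hypothesis Op_relax : relaxation n T Op (LSbar n T p).
Hypothesis F_iter : is_iteration n T W Op F.

Lemma iterate_step_sub b : rsub n T (Op (F b)) (F b).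
Proof.
have [_ [contracting _]] := Op_relax W F F_iter b.
apply: contracting; exact: LSbar_sub.
Qed.

Lemma iterate_antimono a b : wo_lt b a -> rsub n T (F a) (F b).
Proof.
elim/(well_founded_ind (wo_wf W)): a b => a IH b ltba.
have [_ [F_succ F_lim]] := F_iter a.
case: (wo_zero_succ_or_limit a) => [a0|[[c ltca c_last]|[a_pos a_lim]]].
- by case: (a0 b).
- rewrite (F_succ c ltca c_last).
  case: (wo_total W b c) => [ltbc|[->|ltcb]].
  + move=> i x /iterate_step_sub Fcx; exact: (IH c ltca b ltbc).
  + exact: iterate_step_sub.
  + by case: (c_last b).
- by rewrite (F_lim a_pos a_lim) => i x; apply.
Qed.

Lemma undominated_in_iterate a i x :
  ~ (exists s', sdom n T p (F a) i s' x) -> F a i x.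
Proof.
elim/(well_founded_ind (wo_wf W)): a => a IH undom.
have undom_before b : wo_lt b a -> ~ exists s', sdom n T p (F b) i s' x.
  move=> ltba [s' dom]; apply: undom; exists s'.
  exact: sdom_antimono (iterate_antimono _ _ ltba) dom.
have [F_zero [F_succ F_lim]] := F_iter a.
case: (wo_zero_succ_or_limit a) => [a0|[[b ltba b_last]|[a_pos a_lim]]].
- by rewrite (F_zero a0).
- have [LSbar_sub_Op _] := Op_relax W F F_iter b.
  rewrite (F_succ b ltba b_last); apply: LSbar_sub_Op; split.
  + by move=> [s' [_ dom]]; apply: (undom_before b ltba); exists s'.
  + exact: IH (undom_before b ltba).
- by rewrite (F_lim a_pos a_lim) => b ltba; apply: IH (undom_before b ltba).
Qed.

End Iterates.

Theorem mainTheorem9 (n : nat) (T : 'I_n -> Type)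
    (p : forall i : 'I_n, (forall j, T j) -> R)
    (W : wellorder) (alpha : W) :
  prop_C n T p W alpha -> prop_D n T p W alpha.
Proof.
move=> C_alpha Op Op_relax F F_iter i s dominated.
have [sst [sst_dom sst_undom]] := C_alpha Op Op_relax F F_iter i s dominated.
exists sst; split => //.
exact: undominated_in_iterate Op_relax F_iter _ _ _ sst_undom.
Qed.
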